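(* For all $n\geq 2$ and $0\leq k\leq n-1$, $$Q_{n,k}(x,t)-Q_{n,k}(x-t-1,t)=(t+1)(n+k-1)\,Q_{n-1,k}(x,t).$$
   Context: Define polynomials $Q_m(x,y,z,t)$ by $Q_1=1$ and $Q_{m+1}=[x+mz+(y+t)(m+y\partial_y)]Q_m$ for $m\ge1$ ($\partial_y$ the partial derivative in $y$), and define $Q_{m,k}(x,t)$ by $Q_m(x,y,1,t)=\sum_{k=0}^{m-1}Q_{m,k}(x,t)y^k$, with the convention $Q_{m,k}=0$ if $k<0$ or $k\geq m$. *)

From HB Require Import structures.
From mathcomp Require Import all_boot all_order all_algebra.
From mathcomp Require Import mpoly.
Set Implicit Arguments. Unset Strict Implicit. Unset Printing Implicit Defensive.
Import GRing.Theory.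
Local Open Scope ring_scope.

(* Coefficient ring of Q_m(x,y,z,t): polynomials in y (outer univariate
   variable 'X) with coefficients in int[x,z,t] = {mpoly int[3]},
   where 'X_0 = x, 'X_1 = z, 'X_2 = t. *)
Definition Rxzt := {mpoly int[3]}.
Definition vx : Rxzt := 'X_(@Ordinal 3 0 isT).
Definition vz : Rxzt := 'X_(@Ordinal 3 1 isT).
Definition vt : Rxzt := 'X_(@Ordinal 3 2 isT).

Definition Qstep (m : nat) (Q : {poly Rxzt}) : {poly Rxzt} :=
  (vx + m%:R * vz)%:P * Q + ('X + vt%:P) * (m%:R *: Q + 'X * Q^`()).

(* Qrec m = Q_{m+1}. *)
Fixpoint Qrec (m : nat) : {poly Rxzt} :=
  if m is m'.+1 then Qstep m (Qrec m') else 1.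

(* Q m = Q_m for m >= 1 (Q 0 is a dummy value equal to Q_1, never used). *)
Definition Q (m : nat) : {poly Rxzt} := Qrec m.-1.

(* Q_{m,k}(x,t) in int[x,t] = {mpoly int[2]} ('X_0 = x, 'X_1 = t):
   coefficient of y^k in Q_m(x,y,1,t).  It is automatically 0 for k >= m. *)
Definition X2 : {mpoly int[2]} := 'X_(@Ordinal 2 0 isT).
Definition T2 : {mpoly int[2]} := 'X_(@Ordinal 2 1 isT).

Definition Qmk (m k : nat) : {mpoly int[2]} :=
  (Q m)`_k \mPo [tuple X2; 1; T2].

Definition shift_x (p : {mpoly int[2]}) : {mpoly int[2]} :=
  p \mPo [tuple X2 - T2 - 1; T2].

From HB Require Import structures.
From mathcomp Require Import all_boot all_order all_algebra.
From mathcomp Require Import mpoly ring.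
Set Implicit Arguments. Unset Strict Implicit. Unset Printing Implicit Defensive.
Local Open Scope ring_scope.
Import GRing.Theory.

(* Reading off the coefficient of y^k in Q_{m+1} = [x + m + (y+t)(m + y d/dy)] Q_m
   (with z = 1) gives the recurrence
     Q_{m+1,k} = (x + m + t(m+k)) Q_{m,k} + (m+k-1) Q_{m,k-1}.
   The substitution x := x - t - 1 maps the coefficient x + m + t(m+k) of level
   m+1 to the coefficient x + (m-1) + t(m-1+k) of level m, differing from it by
   t + 1.  Feeding the identity at level n into the recurrence for Q_{n+1,k} and
   using the recurrence for Q_{n,k} once more then gives it at level n + 1. *)

Lemma sub_rmorph_recurrence (S : comNzRingType) (sigma : {rmorphism S -> S})
    (u a a' q qm p pm : S) (c : nat) :
  a' - a = u -> sigma a' = a -> q = a * p + c%:R * pm ->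
  q - sigma q = u * c.+1%:R * p -> qm - sigma qm = u * c%:R * pm ->
  a' * q + c.+1%:R * qm - sigma (a' * q + c.+1%:R * qm) = u * c.+2%:R * q.
Proof.
move=> <- sigma_a' def_q dq dqm.
have sigma_q : sigma q = q - (a' - a) * c.+1%:R * p by rewrite -dq opprB addrC subrK.
have sigma_qm : sigma qm = qm - (a' - a) * c%:R * pm by rewrite -dqm opprB addrC subrK.
by rewrite rmorphD !rmorphM rmorph_nat sigma_a' sigma_q sigma_qm def_q; ring.
Qed.

Lemma coef_scale_addX_deriv (R : comNzRingType) (p : {poly R}) (m k : nat) :
  (m%:R *: p + 'X * p^`())`_k = (m + k)%:R * p`_k.
Proof.
rewrite coefD coefZ coefXM; case: k => [|k] /=; first by rewrite addr0 addn0.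
by rewrite coef_deriv natrD mulrDl -[p`_k.+1 *+ _]mulr_natl.
Qed.

Definition Qmk_prev (m k : nat) : {mpoly int[2]} :=
  if k is k'.+1 then Qmk m k' else 0.

Lemma Qmk1 (k : nat) : Qmk 1 k = (k == 0)%N%:R.
Proof. by rewrite /Qmk /Q /= coef1 rmorph_nat. Qed.

Lemma Qmk_rec (j k : nat) :
  Qmk j.+2 k = (X2 + j.+1%:R + T2 * (j + k).+1%:R) * Qmk j.+1 k
               + (j + k)%:R * Qmk_prev j.+1 k.
Proof.
rewrite /Qmk /Q /= /Qstep mulrDl !coefD coefCM coefXM coefCM !coef_scale_addX_deriv.
rewrite !(rmorphD, rmorphM, rmorph_nat) /= /vx /vz /vt !comp_mpolyXU /=.
case: k => [|k]; rewrite /Qmk_prev /Qmk /Q /= ?(rmorph0, rmorphM, rmorph_nat); ring.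
Qed.

HB.instance Definition _ :=
  GRing.RMorphism.copy shift_x (comp_mpoly [tuple X2 - T2 - 1; T2]).

Lemma shift_xD (p q : {mpoly int[2]}) : shift_x (p + q) = shift_x p + shift_x q.
Proof. exact: rmorphD. Qed.

Lemma shift_xM (p q : {mpoly int[2]}) : shift_x (p * q) = shift_x p * shift_x q.
Proof. exact: rmorphM. Qed.

Lemma shift_x_nat (n : nat) : shift_x n%:R = n%:R.
Proof. exact: rmorph_nat. Qed.

Lemma shift_xX2 : shift_x X2 = X2 - T2 - 1.
Proof. by rewrite /shift_x /X2 comp_mpolyXU. Qed.

Lemma shift_xT2 : shift_x T2 = T2.
Proof. by rewrite /shift_x /T2 comp_mpolyXU. Qed.

Lemma shift_x_Qmk_rec_coef (i l : nat) :
  shift_x (X2 + i.+1%:R + T2 * l.+1%:R) = X2 + i%:R + T2 * l%:R.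
Proof. by rewrite 2!shift_xD shift_xM !shift_x_nat shift_xX2 shift_xT2; ring. Qed.

Lemma Qmk_sub_shift_x (j k : nat) :
  Qmk j.+2 k - shift_x (Qmk j.+2 k) = (T2 + 1) * (j + k).+1%:R * Qmk j.+1 k.
Proof.
elim: j k => [|j IHj] k.
  rewrite Qmk_rec /Qmk_prev; case: k => [|k]; rewrite !Qmk1.
    by rewrite mulr0 addr0 shift_xM shift_x_Qmk_rec_coef shift_x_nat; ring.
  by rewrite /= mulr0 add0r shift_xM !shift_x_nat subrr mulr0.
rewrite [Qmk j.+3 k]Qmk_rec !addSn.
apply: (sub_rmorph_recurrence _ (shift_x_Qmk_rec_coef j.+1 (j + k).+1)
          (Qmk_rec j k) (IHj k)).
- by ring.
- case: k => [|k] /=; first by rewrite rmorph0 subr0 mulr0.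
  by rewrite addnS IHj.
Qed.

Theorem lemma6p2 (n k : nat) (hn : (2 <= n)%N) (hk : (k <= n - 1)%N) :
  Qmk n k - shift_x (Qmk n k)
  = (T2 + 1) * (n + k - 1)%:R * Qmk (n - 1) k.
Proof.
case: n hn hk => [|[|j]] // _ _.
by rewrite !subn1 addSn /= Qmk_sub_shift_x.
Qed.
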